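(* Let $\mathbf{L}$ be a Euclidean modal logic and let $\mathcal{F}^{\rho}_{A,B}$ be a galaxy in $\mathcal{K}_2$. If $\{2\}\times\mathbf{N}^{-}\subseteq\mathtt{S}_{\mathbf{L}}$, then $\mathbf{L}$ is valid in $\mathcal{F}^{\rho}_{A,B}$.
   Context: A frame is a pair $(W,R)$ with $W$ non-empty and $R\subseteq W\times W$. Modal formulas (propositional variables, $\bot,\neg,\vee,\Box$) have standard Kripke semantics; validity means truth at all points under all valuations. A (normal) modal logic contains all tautologies and K axioms and is closed under uniform substitution, modus ponens and necessitation; a Euclidean modal logic is one not containing $\bot$ and containing $\Diamond\psi\to\Box\Diamond\psi$ for all $\psi$. For sets $A,B$ with $A\cap B=\emptyset$, $A\cup B\ne\emptyset$ and $\rho:A\to\wp(B)$, the galaxy $\mathcal{F}^{\rho}_{A,B}$ has universe $A\cup B$ and relation $\bigcup_{s\in A}(\{s\}\times\rho(s))\cup(B\times B)$. $\mathcal{K}_2$ is the class of galaxies with $|A|\ge4$, $|B|\ge4$ and $|\rho(s)|=2$ for all $s\in A$. $\mathbf{N}^{+}=\{1,2,\dots\}$, $\mathbf{N}^{-}=\{-1,0,1,\dots\}$. For $m\in\mathbf{N}^{+}$, $n\ge0$, the flower $\mathcal{F}_m^n$ has universe $\{0,\dots,m+n\}$ and relation $(\{0\}\times\{1,\dots,m\})\cup\{1,\dots,m+n\}^2$; $\mathcal{F}_m^{-1}$ has universe $\{1,\dots,m\}$ and relation $\{1,\dots,m\}^2$. $\mathtt{S}_{\mathbf{L}}=\{(m,n)\in\mathbf{N}^{+}\times\mathbf{N}^{-}:\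 \mathbf{L}\text{ valid in }\mathcal{F}_m^n\}$. *)

From Stdlib Require Import ZArith Bool.

Inductive form : Type :=
| Var : nat -> form
| Bot : form
| Neg : form -> form
| Or  : form -> form -> form
| Box : form -> form.

Definition Imp (a b : form) : form := Or (Neg a) b.
Definition Dia (a : form) : form := Neg (Box (Neg a)).

Record frame := Frame { fW : Type; fR : fW -> fW -> Prop }.

Fixpoint sat (F : frame) (V : nat -> fW F -> Prop) (w : fW F) (a : form) : Prop :=
  match a with
  | Var p => V p w
  | Bot => False
  | Neg b => ~ sat F V w b
  | Or b c => sat F V w b \/ sat F V w c
  | Box b => forall u, fR F w u -> sat F V u b
  end.

Definition valid_in (F : frame) (a : form) : Prop :=
  forall (V : nat -> fW F -> Prop) (w : fW F), sat F V w a.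

Definition logic := form -> Prop.

Definition logic_valid_in (L : logic) (F : frame) : Prop :=
  forall a, L a -> valid_in F a.

(** Propositional tautologies: formulas true under every boolean assignment
    to their maximal non-propositional subformulas (variables and boxed formulas). *)
Fixpoint peval (v : form -> bool) (a : form) : bool :=
  match a with
  | Var p => v (Var p)
  | Bot => false
  | Neg b => negb (peval v b)
  | Or b c => peval v b || peval v c
  | Box b => v (Box b)
  end.

Definition tautology (a : form) : Prop := forall v, peval v a = true.

Fixpoint subst (s : nat -> form) (a : form) : form :=
  match a with
  | Var p => s p
  | Bot => Bot
  | Neg b => Neg (subst s b)
  | Or b c => Or (subst s b) (subst s c)
  | Box b => Box (subst s b)
  end.

Definition K_axiom : form :=
  Imp (Box (Imp (Var 0) (Var 1))) (Imp (Box (Var 0)) (Box (Var 1))).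

Definition normal_modal_logic (L : logic) : Prop :=
  (forall a, tautology a -> L a) /\
  L K_axiom /\
  (forall s a, L a -> L (subst s a)) /\
  (forall a b, L a -> L (Imp a b) -> L b) /\
  (forall a, L a -> L (Box a)).

Definition euclidean_logic (L : logic) : Prop :=
  normal_modal_logic L /\ ~ L Bot /\
  (forall psi, L (Imp (Dia psi) (Box (Dia psi)))).

Definition galaxy_R (A B : Type) (rho : A -> B -> Prop) (x y : A + B) : Prop :=
  match x, y with
  | inl s, inr b => rho s b
  | inr _, inr _ => True
  | _, _ => False
  end.

Definition galaxy (A B : Type) (rho : A -> B -> Prop) : frame :=
  Frame (A + B) (galaxy_R A B rho).

Definition at_least_4 (T : Type) : Prop :=
  exists x1 x2 x3 x4 : T,
    x1 <> x2 /\ x1 <> x3 /\ x1 <> x4 /\ x2 <> x3 /\ x2 <> x4 /\ x3 <> x4.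

Definition has_exactly_2 {B : Type} (P : B -> Prop) : Prop :=
  exists b1 b2 : B, b1 <> b2 /\ forall b, P b <-> (b = b1 \/ b = b2).

Definition in_K2 (A B : Type) (rho : A -> B -> Prop) : Prop :=
  at_least_4 A /\ at_least_4 B /\ forall s, has_exactly_2 (rho s).

(** Flowers F_m^n, m >= 1, n in N^- = {-1,0,1,...} (n : Z).
    n >= 0: universe {0..m+n}, relation ({0} x {1..m}) u {1..m+n}^2.
    n = -1: universe {1..m}, relation {1..m}^2. *)
Definition flower_pt (m : nat) (n : Z) (k : nat) : Prop :=
  if (n <? 0)%Z then 1 <= k <= m else k <= m + Z.to_nat n.

Definition flower_rel (m : nat) (n : Z) (k l : nat) : Prop :=
  if (n <? 0)%Z then (1 <= k <= m /\ 1 <= l <= m)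
  else (k = 0 /\ 1 <= l <= m) \/
       (1 <= k <= m + Z.to_nat n /\ 1 <= l <= m + Z.to_nat n).

Definition flower (m : nat) (n : Z) : frame :=
  Frame {k : nat | flower_pt m n k}
        (fun x y => flower_rel m n (proj1_sig x) (proj1_sig y)).

Definition S_L (L : logic) (m : nat) (n : Z) : Prop :=
  1 <= m /\ (-1 <= n)%Z /\ logic_valid_in L (flower m n).

(* A formula only sees the finitely many variables below its [var_bound], and
   all cluster points of a galaxy have the same successors, so up to agreement
   on those variables the cluster has finitely many points, listed by some
   [b1 :: b2 :: l] with [rho s = {b1, b2}].  Sending the root [0] of the flower
   F_2^(length l) to [s] and its petal [k + 1] to the [k]-th point of that list
   is a bounded morphism up to this agreement, so validity of L in F_2^n
   transfers to every point of the galaxy. *)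

From Stdlib Require Import ZArith.
From Stdlib Require Import Lia List Classical.
Import ListNotations.

Fixpoint var_bound (a : form) : nat :=
  match a with
  | Var p => S p
  | Bot => 0
  | Neg b => var_bound b
  | Or b c => Nat.max (var_bound b) (var_bound c)
  | Box b => var_bound b
  end.

Section Agreement.

Variables (T : Type) (V : nat -> T -> Prop).

Definition agree_below (N : nat) (x y : T) : Prop :=
  forall p, p < N -> (V p x <-> V p y).

Definition covers (N : nat) (l : list T) : Prop :=
  forall x, exists y, In y l /\ agree_below N x y.

Lemma agree_below_trans N x y z :
  agree_below N x y -> agree_below N y z -> agree_below N x z.
Proof.
  intros Hxy Hyz p Hp; rewrite (Hxy p Hp); exact (Hyz p Hp).
Qed.

Lemma agree_below_sym N x y : agree_below N x y -> agree_below N y x.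
Proof. intros H p Hp; symmetry; exact (H p Hp). Qed.

Lemma agree_below_S N x y :
  agree_below N x y -> (V N x <-> V N y) -> agree_below (S N) x y.
Proof.
  intros H HN p Hp.
  destruct (Nat.eq_dec p N) as [-> | Hne]; [exact HN | apply H; lia].
Qed.

Lemma agree_below_split N c :
  exists x y, forall b, agree_below N b c ->
    agree_below (S N) b x \/ agree_below (S N) b y.
Proof.
  assert (Hpick : forall P : T -> Prop, exists x,
            (exists z, agree_below N z c /\ P z) -> agree_below N x c /\ P x).
  { intro P.
    destruct (classic (exists z, agree_below N z c /\ P z)) as [[z Hz] | Hnone].
    - exists z; auto.
    - exists c; intro Hsome; contradiction. }
  destruct (Hpick (V N)) as [x Hx], (Hpick (fun z => ~ V N z)) as [y Hy].
  exists x, y; intros b Hb.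
  destruct (classic (V N b)) as [HbN | HbN].
  - destruct (Hx (ex_intro _ b (conj Hb HbN))) as [Hxc HxN].
    left; apply agree_below_S; [| tauto].
    exact (agree_below_trans _ _ _ _ Hb (agree_below_sym _ _ _ Hxc)).
  - destruct (Hy (ex_intro _ b (conj Hb HbN))) as [Hyc HyN].
    right; apply agree_below_S; [| tauto].
    exact (agree_below_trans _ _ _ _ Hb (agree_below_sym _ _ _ Hyc)).
Qed.

Lemma covers_S N l : covers N l -> exists l', covers (S N) l'.
Proof.
  intro Hl.
  assert (Hrefine : forall l0, exists l', forall b,
            (exists c, In c l0 /\ agree_below N b c) ->
            exists c', In c' l' /\ agree_below (S N) b c').
  { induction l0 as [| c l0 [l' Hl']].
    - exists []; intros b [c [[] _]].
    - destruct (agree_below_split N c) as [x [y Hxy]].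
      exists (x :: y :: l'); intros b [c' [[<- | Hin] Hbc]].
      + destruct (Hxy b Hbc); [exists x | exists y]; simpl; auto.
      + destruct (Hl' b (ex_intro _ c' (conj Hin Hbc))) as [d [Hd Hbd]].
        exists d; simpl; auto. }
  destruct (Hrefine l) as [l' Hl']; exists l'; intro b; apply Hl', Hl.
Qed.

Lemma covers_exists (t0 : T) N : exists l, covers N l.
Proof.
  induction N as [| N [l Hl]].
  - exists [t0]; intro x; exists t0; split; [left; reflexivity | intros p Hp; lia].
  - exact (covers_S N l Hl).
Qed.

Lemma covers_incl N l l' : incl l l' -> covers N l -> covers N l'.
Proof.
  intros Hincl Hl x; destruct (Hl x) as [y [Hy Hxy]]; exists y; auto.
Qed.

End Agreement.

Lemma sat_same_successors (F : frame) (V : nat -> fW F -> Prop) x y :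
  (forall u, fR F x u <-> fR F y u) ->
  forall a, agree_below _ V (var_bound a) x y -> (sat F V x a <-> sat F V y a).
Proof.
  intros Hsucc a; induction a as [p | | a IH | a IHa b IHb | a _]; simpl; intro Hxy.
  - apply Hxy; lia.
  - tauto.
  - rewrite IH; tauto.
  - rewrite IHa, IHb; [tauto | |];
      intros p Hp; apply Hxy; lia.
  - split; intros H u Hu; apply H, Hsucc, Hu.
Qed.

Definition equiv_upto (G : frame) (V : nat -> fW G -> Prop) (N : nat) u v : Prop :=
  forall a, var_bound a <= N -> (sat G V u a <-> sat G V v a).

(* The back condition only asks for a preimage up to [equiv_upto]; this is what
   lets a finite flower stand for an arbitrarily large galaxy. *)
Lemma sat_bounded_morphism_upto (F G : frame) (f : fW F -> fW G)
    (V : nat -> fW G -> Prop) N :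
  (forall x y, fR F x y -> fR G (f x) (f y)) ->
  (forall x u, fR G (f x) u -> exists y, fR F x y /\ equiv_upto G V N u (f y)) ->
  forall a, var_bound a <= N ->
  forall x, sat F (fun p x => V p (f x)) x a <-> sat G V (f x) a.
Proof.
  intros Hforth Hback a; induction a as [p | | a IH | a IHa b IHb | a IH];
    simpl; intros Hbound x.
  - tauto.
  - tauto.
  - rewrite IH; tauto.
  - rewrite IHa, IHb by lia; tauto.
  - split.
    + intros H u Hu.
      destruct (Hback x u Hu) as [y [Hxy Huy]].
      apply (Huy a Hbound), IH, H; assumption.
    + intros H y Hxy; apply IH, H, Hforth; assumption.
Qed.

Lemma galaxy_inr_same_successors A B rho (b b' : B) (u : A + B) :
  galaxy_R A B rho (inr b) u <-> galaxy_R A B rho (inr b') u.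
Proof. destruct u; simpl; tauto. Qed.

Lemma flower_pt_of_nat m n k : flower_pt m (Z.of_nat n) k <-> k <= m + n.
Proof.
  unfold flower_pt; replace (Z.of_nat n <? 0)%Z with false by (symmetry; apply Z.ltb_ge; lia).
  rewrite Nat2Z.id; reflexivity.
Qed.

Lemma flower_rel_of_nat m n k l :
  flower_rel m (Z.of_nat n) k l <->
  (k = 0 /\ 1 <= l <= m) \/ (1 <= k <= m + n /\ 1 <= l <= m + n).
Proof.
  unfold flower_rel; replace (Z.of_nat n <? 0)%Z with false by (symmetry; apply Z.ltb_ge; lia).
  rewrite Nat2Z.id; reflexivity.
Qed.

Definition flower_point m n k (Hk : k <= m + n) : fW (flower m (Z.of_nat n)) :=
  exist _ k (proj2 (flower_pt_of_nat m n k) Hk).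

Section FlowerIntoGalaxy.

Variables (A B : Type) (rho : A -> B -> Prop) (s : A) (b1 b2 : B) (l : list B).
Hypothesis rho_s : forall b, rho s b <-> b = b1 \/ b = b2.

Let G := galaxy A B rho.
Let F := flower 2 (Z.of_nat (length l)).

Definition flower_to_galaxy (x : fW F) : fW G :=
  match proj1_sig x with
  | 0 => inl s
  | S j => inr (nth j (b1 :: b2 :: l) b1)
  end.

Lemma flower_to_galaxy_forth x y :
  fR F x y -> fR G (flower_to_galaxy x) (flower_to_galaxy y).
Proof.
  destruct x as [k Hk], y as [[| [| [| j]]] Hj]; unfold flower_to_galaxy; simpl;
    rewrite flower_rel_of_nat; intro Hrel; destruct k; simpl; try lia; try exact I.
  - apply rho_s; left; reflexivity.
  - apply rho_s; right; reflexivity.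
Qed.

Lemma flower_to_galaxy_back (V : nat -> fW G -> Prop) N :
  covers _ (fun p b => V p (inr b)) N (b1 :: b2 :: l) ->
  forall x u, fR G (flower_to_galaxy x) u ->
  exists y, fR F x y /\ equiv_upto G V N u (flower_to_galaxy y).
Proof.
  intros Hcov [k Hk] [a | b]; unfold flower_to_galaxy; simpl;
    apply flower_pt_of_nat in Hk; destruct k as [| k]; simpl; try contradiction.
  - intros [-> | ->]%rho_s.
    + exists (flower_point 2 (length l) 1 ltac:(lia)); simpl.
      split; [apply flower_rel_of_nat; lia | intros a _; reflexivity].
    + exists (flower_point 2 (length l) 2 ltac:(lia)); simpl.
      split; [apply flower_rel_of_nat; lia | intros a _; reflexivity].
  - intros _.
    destruct (Hcov b) as [c [Hc Hbc]].
    destruct (In_nth _ _ b1 Hc) as [j [Hj <-]]; simpl in Hj.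
    exists (flower_point 2 (length l) (S j) ltac:(lia)); simpl.
    split; [apply flower_rel_of_nat; lia |].
    intros a Ha; apply sat_same_successors.
    + intro u; apply galaxy_inr_same_successors.
    + intros p Hp; apply Hbc; lia.
Qed.

Lemma galaxy_sat_flower_image (V : nat -> fW G -> Prop) phi :
  covers _ (fun p b => V p (inr b)) (var_bound phi) (b1 :: b2 :: l) ->
  valid_in F phi ->
  forall x, sat G V (flower_to_galaxy x) phi.
Proof.
  intros Hcov Hvalid x.
  apply (sat_bounded_morphism_upto F G flower_to_galaxy V (var_bound phi));
    [exact flower_to_galaxy_forth | exact (flower_to_galaxy_back V _ Hcov) | lia |].
  apply Hvalid.
Qed.

End FlowerIntoGalaxy.

Theorem lemma36 (L : logic) (A B : Type) (rho : A -> B -> Prop) :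
  euclidean_logic L ->
  in_K2 A B rho ->
  (forall n : Z, (-1 <= n)%Z -> S_L L 2 n) ->
  logic_valid_in L (galaxy A B rho).
Proof.
  intros _ [[s0 _] [[c0 _] Hrho]] HS phi Hphi V w.
  destruct (covers_exists B (fun p b => V p (inr b)) c0 (var_bound phi)) as [l Hl].
  assert (Hflower : forall m, valid_in (flower 2 (Z.of_nat m)) phi).
  { intro m; destruct (HS (Z.of_nat m) ltac:(lia)) as [_ [_ HL]]; exact (HL phi Hphi). }
  destruct w as [s | b].
  - destruct (Hrho s) as [b1 [b2 [_ Hs]]].
    exact (galaxy_sat_flower_image A B rho s b1 b2 l Hs V phi
             (covers_incl _ _ _ _ _ (incl_tl _ (incl_tl _ (incl_refl _))) Hl)
             (Hflower _) (flower_point 2 (length l) 0 ltac:(lia))).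
  - destruct (Hrho s0) as [b1 [b2 [_ Hs]]].
    (* Listing [b] third makes it the image of petal 3. *)
    exact (galaxy_sat_flower_image A B rho s0 b1 b2 (b :: l) Hs V phi
             (covers_incl _ _ _ _ _ (incl_tl _ (incl_tl _ (incl_tl _ (incl_refl _)))) Hl)
             (Hflower _) (flower_point 2 (length (b :: l)) 3 ltac:(simpl; lia))).
Qed.
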